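(* Let $\rho_z$ and $\rho_{z'}$ be the discounted state occupation measures of a fixed policy from initial states $z,z'\in\mathcal{S}$, let $R:\mathcal{S}\to\mathbb{R}^d$ be a bounded measurable function, and set $H=\big\|\int R(s)\,\rho_z(ds)\big\|$. Then \[ q:=\int\!\!\int R(s)^\top R(s')\,\rho_z(ds)\,\rho_{z'}(ds') \;\ge\; H\Big(H-2\,\|R\|_{\infty,2}\,\|\Delta_{z',z}\|_{\mathrm{TV}}\Big). \]
   Context: For a Markov decision process with state space $\mathcal{S}$, policy $\pi$, and discount factor $\gamma\in(0,1)$, the discounted state occupation measure from $z$ is $\rho_z(\cdot)=(1-\gamma)\sum_{t\ge0}\gamma^t\,\mathbb{P}(s_t\in\cdot\mid s_0=z,\pi)$ (a probability measure on $\mathcal{S}$). $\Delta_{z',z}=\rho_{z'}-\rho_z$ is a signed measure and $\|\Delta_{z',z}\|_{\mathrm{TV}}=\sup_B|\Delta_{z',z}(B)|$ is its total variation norm. $\|\cdot\|$ is the Euclidean norm, and $\|R\|_{\infty,2}=\sqrt{\sum_{i=1}^d\big(\sup_{s\in\mathcal{S}}|[R(s)]_i|\big)^2}$. *)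

From HB Require Import structures.
From mathcomp Require Import all_boot all_order all_algebra.
From mathcomp Require Import all_classical all_reals all_analysis.
Set Implicit Arguments. Unset Strict Implicit. Unset Printing Implicit Defensive.
Import Order.TTheory GRing.Theory Num.Theory.
Local Open Scope classical_set_scope.
Local Open Scope ring_scope.

(* n_step P pi t z B = P(s_t \in B | s_0 = z, pi)  (backward recursion) *)
Fixpoint n_step {dS dA} {S : measurableType dS} {A : measurableType dA}
  {R : realType} (P : R.-pker (S * A)%type ~> S) (pi : R.-pker S ~> A)
  (t : nat) (z : S) (B : set S) : \bar R :=
  match t with
  | 0%N => \d_z B
  | t'.+1 => (\int[pi z]_a \int[P (z, a)]_s (n_step P pi t' s B))%E
  end.

Definition occupation {dS dA} {S : measurableType dS} {A : measurableType dA}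
  {R : realType} (P : R.-pker (S * A)%type ~> S) (pi : R.-pker S ~> A)
  (gamma : R) (z : S) (B : set S) : \bar R :=
  (((1 - gamma)%:E) * \sum_(0 <= t <oo) ((gamma ^+ t)%:E * n_step P pi t z B))%E.

Definition is_occupation {dS dA} {S : measurableType dS} {A : measurableType dA}
  {R : realType} (P : R.-pker (S * A)%type ~> S) (pi : R.-pker S ~> A)
  (gamma : R) (z : S) (mu : probability S R) : Prop :=
  forall B, measurable B -> mu B = occupation P pi gamma z B.

Definition vec_integral {dS} {S : measurableType dS} {R : realType} {d : nat}
  (mu : probability S R) (Rf : S -> 'rV[R]_d) : 'rV[R]_d :=
  \row_i (\int[mu]_(s in setT) Rf s ord0 i)%R.

Definition euclid_norm {R : realType} {d : nat} (v : 'rV[R]_d) : R :=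
  Num.sqrt (\sum_i (v ord0 i) ^+ 2).

Definition sup2_norm {dS} {S : measurableType dS} {R : realType} {d : nat}
  (Rf : S -> 'rV[R]_d) : R :=
  Num.sqrt (\sum_i (sup [set `|Rf s ord0 i| | s in [set: S]]) ^+ 2).

Definition tv_norm {dS} {S : measurableType dS} {R : realType}
  (mu nu : probability S R) : R :=
  sup [set `|fine (mu B) - fine (nu B)| | B in [set B : set S | measurable B]].

From HB Require Import structures.
From mathcomp Require Import all_boot all_order all_algebra.
From mathcomp Require Import all_classical all_reals all_analysis.
From mathcomp Require Import measurable_realfun ring lra.

(* With v and w the mean reward vectors under rho_z and rho_z', linearity of
   the integral gives q = <v, w>.  The Hahn-Jordan decomposition of
   rho_z' - rho_z bounds every coordinate |w_i - v_i| by
   2 sup|R_i| ||Delta||_TV, hence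
   <v, w> >= |v|^2 - 2 ||Delta||_TV sum_i |v_i| sup|R_i|,
   and Cauchy-Schwarz bounds the last sum by H ||R||_{infty,2}. *)

Set Implicit Arguments.
Unset Strict Implicit.
Unset Printing Implicit Defensive.

Import Order.TTheory GRing.Theory Num.Theory.
Local Open Scope classical_set_scope.
Local Open Scope ring_scope.

Section cauchy_schwarz.
Variables (R : rcfType) (n : nat).
Implicit Types a b k : 'I_n -> R.

Lemma cauchy_schwarz_sum a b :
  \sum_i a i * b i <= Num.sqrt (\sum_i a i ^+ 2) * Num.sqrt (\sum_i b i ^+ 2).
Proof.
set A := \sum_i a i ^+ 2; set B := \sum_i b i ^+ 2; set C := \sum_i a i * b i.
have A0 : 0 <= A by apply: sumr_ge0 => i _; exact: sqr_ge0.
have B0 : 0 <= B by apply: sumr_ge0 => i _; exact: sqr_ge0.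
have lagrange : \sum_i \sum_j (a i * b j - a j * b i) ^+ 2 = 2 * (A * B - C ^+ 2).
  have -> : A * B = \sum_i \sum_j a i ^+ 2 * b j ^+ 2.
    by rewrite mulr_suml; apply: eq_bigr => i _; rewrite mulr_sumr.
  have -> : C ^+ 2 = \sum_i \sum_j a i * b i * (a j * b j).
    by rewrite expr2 mulr_suml; apply: eq_bigr => i _; rewrite mulr_sumr.
  have swap : \sum_i \sum_j a i ^+ 2 * b j ^+ 2 =
               \sum_i \sum_j b i ^+ 2 * a j ^+ 2.
    rewrite exchange_big; apply: eq_bigr => i _.
    by apply: eq_bigr => j _; rewrite mulrC.
  rewrite mulrBr mulr_natl mulr2n {2}swap -big_split /= mulr_sumr -sumrB.
  apply: eq_bigr => i _; rewrite -big_split /= mulr_sumr -sumrB.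
  by apply: eq_bigr => j _; ring.
have : C ^+ 2 <= A * B.
  have : 0 <= \sum_i \sum_j (a i * b j - a j * b i) ^+ 2.
    by apply: sumr_ge0 => i _; apply: sumr_ge0 => j _; exact: sqr_ge0.
  rewrite lagrange; lra.
rewrite -sqrtrM // => CAB.
have [C0|C0] := lerP C 0; first exact: le_trans C0 (sqrtr_ge0 _).
by rewrite -(ger0_norm (ltW C0)) -sqrtr_sqr ler_sqrt ?mulr_ge0.
Qed.

Lemma dot_ge_of_close a b k (t : R) : 0 <= t ->
    (forall i, `|b i - a i| <= k i * t) ->
  Num.sqrt (\sum_i a i ^+ 2) *
    (Num.sqrt (\sum_i a i ^+ 2) - Num.sqrt (\sum_i k i ^+ 2) * t)
  <= \sum_i a i * b i.
Proof.
move=> t0 abk.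
have termwise : \sum_i (a i ^+ 2 - `|a i| * k i * t) <= \sum_i a i * b i.
  apply: ler_sum => i _.
  have : - (`|a i| * `|b i - a i|) <= a i * (b i - a i).
    by rewrite lerNl -normrM -normrN -mulrN; exact: ler_norm.
  have := ler_wpM2l (normr_ge0 (a i)) (abk i).
  rewrite mulrBr mulrA -expr2; lra.
have normsq : \sum_i `|a i| ^+ 2 = \sum_i a i ^+ 2.
  by apply: eq_bigr => i _; rewrite real_normK ?num_real.
have cs := cauchy_schwarz_sum (fun i => `|a i|) k; rewrite /= normsq in cs.
rewrite sumrB -mulr_suml in termwise.
set N := Num.sqrt (\sum_i a i ^+ 2) in cs *.
have N0 : 0 <= N := sqrtr_ge0 _.
have NN : N ^+ 2 = \sum_i a i ^+ 2.
  by rewrite sqr_sqrtr // sumr_ge0 // => i _; exact: sqr_ge0.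
nra.
Qed.

End cauchy_schwarz.

Section bounded_integrals.
Context {R : realType} {dS : measure_display} {S : measurableType dS}.
Implicit Types (m mu nu : {finite_measure set S -> \bar R}) (f : S -> R).

Lemma bounded_integrable mu f (M : R) :
  measurable_fun setT f -> (forall s, `|f s| <= M) ->
  mu.-integrable setT (EFin \o f).
Proof.
move=> mf fM; apply: measurable_bounded_integrable => //.
  exact: fin_num_fun_lty (@fin_num_measure _ _ _ mu).
exists M; split; first by rewrite num_real.
by move=> x Mx s _; exact: le_trans (fM s) (ltW Mx).
Qed.

Lemma Rintegral_sum mu (n : nat) (F : 'I_n -> S -> R) :
  (forall i, mu.-integrable setT (EFin \o F i)) ->
  \int[mu]_(x in setT) (\sum_i F i x) = \sum_i \int[mu]_(x in setT) F i x.
Proof.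
move=> iF; rewrite /Rintegral.
under eq_integral do rewrite -sumEFin.
rewrite integral_sum // -EFin_sum_fine //= => i _.
exact: integrable_fin_num (iF i).
Qed.

Lemma Rintegral_Rintegral_dotmx mu nu (n : nat) (f : S -> 'rV[R]_n) (M : R) :
    (forall i, measurable_fun setT (fun s => f s ord0 i)) ->
    (forall s i, `|f s ord0 i| <= M) ->
  \int[nu]_(t in setT) \int[mu]_(s in setT) (f s *m (f t)^T) ord0 ord0 =
  \sum_i (\int[mu]_(s in setT) f s ord0 i) * \int[nu]_(t in setT) f t ord0 i.
Proof.
move=> mf fM.
have fint m i : m.-integrable setT (EFin \o (fun s => f s ord0 i)).
  exact: bounded_integrable _ (mf i) (fM ^~ i).
have scaled_int m i c : m.-integrable setT (EFin \o (fun s => c * f s ord0 i)).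
  apply: (bounded_integrable _ (M := `|c| * M)).
    exact: measurable_funM (measurable_cst _) (mf i).
  by move=> s; rewrite normrM ler_wpM2l.
transitivity (\int[nu]_(t in setT)
    \sum_i (\int[mu]_(s in setT) f s ord0 i) * f t ord0 i).
  apply: eq_Rintegral => t _.
  transitivity (\int[mu]_(s in setT) \sum_i f t ord0 i * f s ord0 i).
    apply: eq_Rintegral => s _; rewrite !mxE; apply: eq_bigr => i _.
    by rewrite mxE mulrC.
  rewrite (Rintegral_sum (F := fun i s => f t ord0 i * f s ord0 i)) => [|i].
    apply: eq_bigr => i _; rewrite RintegralZl //; [exact: mulrC | exact: fint].
  exact: scaled_int.
rewrite (Rintegral_sum
  (F := fun i t => (\int[mu]_(s in setT) f s ord0 i) * f t ord0 i)).
  by apply: eq_bigr => i _; rewrite RintegralZl //; exact: fint.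
by move=> i; exact: scaled_int.
Qed.

Lemma normr_Rintegral_le_mass mu f (M : R) :
  measurable_fun setT f -> (forall s, `|f s| <= M) ->
  `|\int[mu]_(s in setT) f s| <= M * fine (mu setT).
Proof.
move=> mf fM; have fint := bounded_integrable mu mf fM.
apply: le_trans (le_normr_Rintegral measurableT fint) _.
rewrite -Rintegral_cst //; apply: le_Rintegral => //.
- exact: integrable_norm fint.
- exact: (bounded_integrable _ (M := `|M|) (measurable_cst M) (fun=> lexx _)).
Qed.

Lemma Rintegral_eq_of_measure_sum (m1 m2 m3 m4 : {finite_measure set S -> \bar R})
    f (M : R) :
    (forall A, measurable A -> m1 A + m2 A = m3 A + m4 A)%E ->
    measurable_fun setT f -> (forall s, `|f s| <= M) ->
  \int[m1]_(s in setT) f s + \int[m2]_(s in setT) f s =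
  \int[m3]_(s in setT) f s + \int[m4]_(s in setT) f s.
Proof.
move=> m1234 mf fM.
have fint m := bounded_integrable m mf fM.
have EFin_Rintegral m :
    (\int[m]_(s in setT) f s)%:E = (\int[m]_(s in setT) (f s)%:E)%E.
  by rewrite fineK //; exact: integrable_fin_num (fint m).
apply: EFin_inj; rewrite !EFinD !EFin_Rintegral.
rewrite -!integral_measure_add //; [|exact: fint..].
apply: eq_measure_integral => A mA _.
by have := m1234 A mA; rewrite -!measure_addE.
Qed.

End bounded_integrals.

Section total_variation.
Context {R : realType} {dS : measure_display} {S : measurableType dS}.
Implicit Types mu nu : probability S R.

Lemma tv_norm_ub mu nu B : measurable B ->
  `|fine (mu B) - fine (nu B)| <= tv_norm mu nu.
Proof.
move=> mB; apply: ub_le_sup; last by exists B.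
exists 1 => _ [C mC <-].
have fine_prob (P : probability S R) : 0 <= fine (P C) <= 1.
  rewrite fine_ge0 ?measure_ge0 //= -lee_fin fineK ?fin_num_measure //.
  exact: probability_le1.
have /andP[? ?] := fine_prob mu; have /andP[? ?] := fine_prob nu.
rewrite ler_norml; apply/andP; split; lra.
Qed.

Lemma tv_norm_ge0 mu nu : 0 <= tv_norm mu nu.
Proof. exact: le_trans (normr_ge0 _) (tv_norm_ub mu nu measurable0). Qed.

Lemma jordan_decomposition_tv mu nu :
  exists Jp Jn : {finite_measure set S -> \bar R},
    [/\ (forall A, measurable A -> mu A + Jn A = nu A + Jp A)%E,
        fine (Jp setT) <= tv_norm mu nu & fine (Jn setT) <= tv_norm mu nu].
Proof.
pose chg :=
  cadd (charge_of_finite_measure mu) (copp (charge_of_finite_measure nu)).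
have [P [N PN]] := Hahn_decomposition chg.
have [[mP _] [mN _] _ _] := PN.
pose Jp := jordan_pos PN; pose Jn := jordan_neg PN.
have decomp A : measurable A -> (mu A + Jn A = nu A + Jp A)%E.
  move=> mA.
  have : (mu A - nu A = Jp A + (-1)%:E * Jn A)%E by exact (jordan_decomp PN mA).
  have [muA nuA JpA JnA] : [/\ mu A \is a fin_num, nu A \is a fin_num,
    Jp A \is a fin_num & Jn A \is a fin_num] by split; exact: fin_num_measure.
  rewrite -(fineK muA) -(fineK nuA) -(fineK JpA) -(fineK JnA).
  by rewrite -EFinN -!EFinM -!EFinD => -[jordan]; congr EFin; lra.
have Jp_tv : fine (Jp setT) <= tv_norm mu nu.
  rewrite /Jp jordan_posE cjordan_posE /crestr0 mem_set // /crestr /= setTI.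
  rewrite /cadd /copp /= fineB ?fin_num_measure //.
  exact: le_trans (ler_norm _) (tv_norm_ub mu nu mP).
have Jn_tv : fine (Jn setT) <= tv_norm mu nu.
  rewrite /Jn jordan_negE cjordan_negE /crestr0 mem_set // /crestr /= setTI.
  rewrite /cadd /copp /= fineN fineB ?fin_num_measure //.
  by apply: le_trans (tv_norm_ub mu nu mN); rewrite -normrN ler_norm.
by exists Jp, Jn.
Qed.

Lemma normr_Rintegral_sub_le_tv mu nu (f : S -> R) (M : R) : 0 <= M ->
    measurable_fun setT f -> (forall s, `|f s| <= M) ->
  `|\int[mu]_(s in setT) f s - \int[nu]_(s in setT) f s| <= 2 * M * tv_norm mu nu.
Proof.
move=> M0 mf fM.
have [Jp [Jn [munu Jp_tv Jn_tv]]] := jordan_decomposition_tv mu nu.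
have := Rintegral_eq_of_measure_sum munu mf fM.
have := normr_Rintegral_le_mass Jp mf fM.
have := normr_Rintegral_le_mass Jn mf fM.
have := ler_wpM2l M0 Jp_tv; have := ler_wpM2l M0 Jn_tv.
rewrite !ler_norml; nra.
Qed.

End total_variation.

Theorem lemma1 (R : realType) (dS dA : measure_display)
  (S : measurableType dS) (A : measurableType dA)
  (P : R.-pker (S * A)%type ~> S) (pi : R.-pker S ~> A)
  (gamma : R) (hgamma : 0 < gamma < 1)
  (z z' : S) (rho_z rho_z' : probability S R)
  (hz : is_occupation P pi gamma z rho_z)
  (hz' : is_occupation P pi gamma z' rho_z')
  (d : nat) (Rf : S -> 'rV[R]_d)
  (Rmeas : forall i, measurable_fun [set: S] (fun s => Rf s ord0 i))
  (Rbdd : exists M : R, forall s i, `|Rf s ord0 i| <= M) :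
  let H := euclid_norm (vec_integral rho_z Rf) in
  let q := (\int[rho_z']_(s' in setT)
              (\int[rho_z]_(s in setT) (Rf s *m (Rf s')^T) ord0 ord0)%R)%R in
  q >= H * (H - 2 * sup2_norm Rf * tv_norm rho_z' rho_z).
Proof.
cbv zeta; have [M RM] := Rbdd.
pose K i := sup [set `|Rf s ord0 i| | s in [set: S]].
have RK s i : `|Rf s ord0 i| <= K i.
  by apply: ub_le_sup; [exists M => _ [t _ <-] | exists s].
pose v i := \int[rho_z]_(s in setT) Rf s ord0 i.
pose w i := \int[rho_z']_(s in setT) Rf s ord0 i.
have wv i : `|w i - v i| <= K i * (2 * tv_norm rho_z' rho_z).
  rewrite mulrCA mulrA; apply: normr_Rintegral_sub_le_tv (Rmeas i) (RK ^~ i).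
  exact: le_trans (normr_ge0 _) (RK z i).
rewrite (Rintegral_Rintegral_dotmx _ _ Rmeas RM).
have -> : euclid_norm (vec_integral rho_z Rf) = Num.sqrt (\sum_i v i ^+ 2).
  by congr Num.sqrt; apply: eq_bigr => i _; rewrite mxE.
rewrite (mulrC 2) -mulrA.
exact: dot_ge_of_close (mulr_ge0 _ (tv_norm_ge0 _ _)) wv.
Qed.
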